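(* Let $\varepsilon\in(0,1)$ and let $\tau,\alpha,f_0,g$ be as defined in the context. If $n$ is sufficiently large, then for every $x\in\{0,1\}^n$ with $f(x)<f_0$, \[E[g(\mathcal{M}(x))]\le 2.\]
   Context: $f$ is OneMax, $f(x)=\sum_i x_i$. $\mathcal{M}$ is standard bit mutation: $\mathcal{M}(x)$ flips each bit of $x$ independently with probability $1/n$. Potential function: $\tau=\frac{4e}{\varepsilon}$, $\alpha=1-\frac1\tau\ln\big(1+\frac1\tau\big)$, $f_0=\lceil\alpha n\rceil$, and $g(x)=\tau^{f(x)-f_0}$ if $f(x)\ge f_0$ and $g(x)=0$ otherwise. *)

From Stdlib Require Import Reals Lra Lia ZArith List.
Import ListNotations.
Open Scope R_scope.

Fixpoint all_bitstrings (n : nat) : list (list bool) :=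
  match n with
  | O => [[]]
  | S m => flat_map (fun s => [false :: s; true :: s]) (all_bitstrings m)
  end.

Definition onemax (x : list bool) : nat := count_occ Bool.bool_dec x true.

Definition Rceil (r : R) : Z := (- Int_part (- r))%Z.

(* Probability that standard bit mutation (rate 1/n) maps x to y
   (x, y of the same length n). *)
Definition mut_prob (n : nat) (x y : list bool) : R :=
  fold_right Rmult 1
    (map (fun p : bool * bool =>
            if Bool.eqb (fst p) (snd p) then 1 - / INR n else / INR n)
         (combine x y)).

Definition tau (eps : R) : R := 4 * exp 1 / eps.
Definition alpha (eps : R) : R := 1 - / tau eps * ln (1 + / tau eps).
Definition f0 (eps : R) (n : nat) : Z := Rceil (alpha eps * INR n).

Definition gpot (eps : R) (n : nat) (x : list bool) : R :=
  if Z.leb (f0 eps n) (Z.of_nat (onemax x))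
  then powerRZ (tau eps) (Z.of_nat (onemax x) - f0 eps n)
  else 0.

Definition expected_g_mut (eps : R) (n : nat) (x : list bool) : R :=
  fold_right Rplus 0
    (map (fun y => mut_prob n x y * gpot eps n y) (all_bitstrings n)).

From Stdlib Require Import Reals ZArith List Lra Lia Psatz.
Import ListNotations.
Open Scope R_scope.

(* Write p = 1/n, t = tau, F = f0 and k = f(x) < F.
   Since g(y) <= t^(f(y) - F) for every y, E[g(M(x))] <= E[t^f(M(x))] / t^F.
   The bits of M(x) are independent, so E[t^f(M(x))] is a product over the
   bits of x of the factor (1-p) + p t = q (bit 0) or p + (1-p) t <= t (bit 1);
   hence E[t^f(M(x))] <= q^(n-k) t^k, and since q <= t and k < F,
      E[g(M(x))] <= q^(n-k) t^k / t^F <= q^(n-F) <= exp((n-F) p t).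
   Finally n - F <= (1 - alpha) n = n ln(1 + 1/t) / t, so the right-hand side
   is at most 1 + 1/t <= 2.  The bound therefore holds for every n >= 1.
   The file first proves the finite-sum facts, then the product formula for
   E[t^f(M(x))] and its bound, then the real-analytic estimates and the
   properties of tau, alpha, f0, and finally assembles lemma5. *)

Lemma sum_map_le {A : Type} (f g : A -> R) (l : list A) :
  (forall y, In y l -> f y <= g y) ->
  fold_right Rplus 0 (map f l) <= fold_right Rplus 0 (map g l).
Proof.
  induction l as [|a l IH]; simpl; intros H; [lra|].
  apply Rplus_le_compat; auto.
Qed.

Lemma sum_map_scal {A : Type} (c : R) (f : A -> R) (l : list A) :
  fold_right Rplus 0 (map (fun s => c * f s) l) = c * fold_right Rplus 0 (map f l).
Proof. induction l as [|a l IH]; simpl; [ring | rewrite IH; ring]. Qed.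

Lemma sum_all_bitstrings_S (f : list bool -> R) (m : nat) :
  fold_right Rplus 0 (map f (all_bitstrings (S m)))
  = fold_right Rplus 0
      (map (fun s => f (false :: s) + f (true :: s)) (all_bitstrings m)).
Proof.
  simpl. induction (all_bitstrings m) as [|a l IH]; simpl; [ring | rewrite IH; ring].
Qed.

Definition flip_weight (p : R) (b c : bool) : R :=
  if Bool.eqb b c then 1 - p else p.

Lemma mut_prob_cons (n : nat) (b c : bool) (x y : list bool) :
  mut_prob n (b :: x) (c :: y) = flip_weight (/ INR n) b c * mut_prob n x y.
Proof. reflexivity. Qed.

Lemma onemax_cons (c : bool) (y : list bool) :
  onemax (c :: y) = ((if c then 1 else 0) + onemax y)%nat.
Proof. unfold onemax; destruct c; reflexivity. Qed.

Lemma zeros_plus_ones (x : list bool) :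
  (count_occ Bool.bool_dec x false + onemax x)%nat = length x.
Proof.
  induction x as [|b x IH]; [reflexivity|].
  rewrite onemax_cons. destruct b; simpl; unfold onemax in *; lia.
Qed.

Lemma mut_prob_nonneg (n : nat) (x y : list bool) :
  (1 <= n)%nat -> 0 <= mut_prob n x y.
Proof.
  intros Hn.
  assert (Hp : 0 < / INR n <= 1).
  { assert (1 <= INR n) by (apply (le_INR 1); lia).
    split; [apply Rinv_0_lt_compat; lra|].
    rewrite <- Rinv_1; apply Rinv_le_contravar; lra. }
  revert y; induction x as [|b x IH]; intros [|c y];
    try (unfold mut_prob; simpl; lra).
  rewrite mut_prob_cons. apply Rmult_le_pos; auto.
  unfold flip_weight; destruct (Bool.eqb b c); lra.
Qed.

(* The probability generating function of f(M(x)) for mutation rate p: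
   the product over the bits b of x of P(b -> 0) + P(b -> 1) t. *)
Fixpoint mutation_pgf (p t : R) (x : list bool) : R :=
  match x with
  | [] => 1
  | b :: x' => (flip_weight p b false + flip_weight p b true * t) * mutation_pgf p t x'
  end.

(* E[t^f(M(x))] equals the product formula, by independence of the bits. *)
Lemma expected_pow_onemax (n : nat) (t : R) (x : list bool) :
  fold_right Rplus 0
    (map (fun y => mut_prob n x y * t ^ onemax y) (all_bitstrings (length x)))
  = mutation_pgf (/ INR n) t x.
Proof.
  induction x as [|b x IH].
  - simpl. unfold mut_prob, onemax; simpl. ring.
  - simpl length. rewrite sum_all_bitstrings_S.
    rewrite (map_ext _ (fun s => (flip_weight (/ INR n) b false
                                  + flip_weight (/ INR n) b true * t) *
                                 (mut_prob n x s * t ^ onemax s))).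
    + rewrite sum_map_scal, IH. reflexivity.
    + intros s. rewrite !mut_prob_cons, !onemax_cons. simpl. ring.
Qed.

(* A zero bit contributes the factor q = 1 + p (t - 1), a one bit at most t. *)
Lemma mutation_pgf_bound (p t : R) (x : list bool) :
  0 <= p <= 1 -> 1 <= t ->
  0 <= mutation_pgf p t x <=
  (1 + p * (t - 1)) ^ count_occ Bool.bool_dec x false * t ^ onemax x.
Proof.
  intros Hp Ht.
  induction x as [|b x [IH0 IH1]]; [simpl; unfold onemax; simpl; lra|].
  rewrite onemax_cons. simpl mutation_pgf. unfold flip_weight.
  set (zeros := (1 + p * (t - 1)) ^ count_occ Bool.bool_dec x false) in *.
  set (ones := t ^ onemax x) in *.
  destruct b; simpl; fold zeros ones.
  - replace (zeros * (t * ones)) with (t * (zeros * ones)) by ring.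
    split; [apply Rmult_le_pos|apply Rmult_le_compat]; nra.
  - replace ((1 + p * (t - 1)) * zeros * ones)
      with ((1 + p * (t - 1)) * (zeros * ones)) by ring.
    split; [apply Rmult_le_pos|apply Rmult_le_compat]; nra.
Qed.

Lemma truncated_power_le (t : R) (F m : nat) : 0 < t ->
  (if Z.leb (Z.of_nat F) (Z.of_nat m)
   then powerRZ t (Z.of_nat m - Z.of_nat F) else 0) <= t ^ m / t ^ F.
Proof.
  intros Ht.
  assert (HtF : 0 < t ^ F) by (apply pow_lt; lra).
  destruct (Z.leb_spec (Z.of_nat F) (Z.of_nat m)) as [Hle|Hlt].
  - rewrite <- Nat2Z.inj_sub by lia. rewrite <- pow_powerRZ.
    replace m with ((m - F) + F)%nat at 2 by lia.
    rewrite pow_add. right. field. lra.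
  - left. apply Rdiv_lt_0_compat; [apply pow_lt|]; lra.
Qed.

(* Replacing g by the untruncated potential t^(f - F) turns E[g(M(x))] into
   the generating function of f(M(x)), scaled by t^-F. *)
Lemma expected_g_le_pgf (eps : R) (n F : nat) (x : list bool) :
  (1 <= n)%nat -> 0 < tau eps -> length x = n -> f0 eps n = Z.of_nat F ->
  expected_g_mut eps n x <= mutation_pgf (/ INR n) (tau eps) x / tau eps ^ F.
Proof.
  intros Hn Ht Hlen HF.
  assert (HtF : 0 < tau eps ^ F) by (apply pow_lt; lra).
  unfold expected_g_mut, Rdiv. rewrite <- (expected_pow_onemax n), Hlen.
  rewrite Rmult_comm, <- sum_map_scal. apply sum_map_le. intros y _.
  replace (/ tau eps ^ F * (mut_prob n x y * tau eps ^ onemax y))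
    with (mut_prob n x y * (tau eps ^ onemax y / tau eps ^ F)) by (field; lra).
  apply Rmult_le_compat_l; [apply mut_prob_nonneg; lia|].
  unfold gpot. rewrite HF. apply truncated_power_le; lra.
Qed.

(* With 1 <= q <= t and k <= F <= m, moving F - k factors from q to t gives
   q^(m-k) t^k / t^F <= q^(m-F). *)
Lemma pow_exchange_bound (q t : R) (k F m : nat) :
  1 <= q <= t -> (k <= F <= m)%nat ->
  q ^ (m - k) * t ^ k / t ^ F <= q ^ (m - F).
Proof.
  intros Hq Hkm.
  assert (Hd : q ^ (F - k) <= t ^ (F - k)) by (apply pow_incr; lra).
  assert (Ht : 0 < t ^ k) by (apply pow_lt; lra).
  assert (Htd : 0 < t ^ (F - k)) by (apply pow_lt; lra).
  assert (Hqm : 0 <= q ^ (m - F)) by (apply pow_le; lra).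
  replace (m - k)%nat with ((m - F) + (F - k))%nat by lia.
  replace F with (k + (F - k))%nat at 3 by lia.
  rewrite !pow_add.
  apply Rmult_le_reg_r with (t ^ k * t ^ (F - k)); [nra|].
  field_simplify; [|split; lra].
  replace (q ^ (m - F) * q ^ (F - k) * t ^ k)
    with (q ^ (m - F) * t ^ k * q ^ (F - k)) by ring.
  apply Rmult_le_compat_l; nra.
Qed.

Lemma pow_le_exp (u : R) (m : nat) : 0 <= u -> (1 + u) ^ m <= exp (INR m * u).
Proof.
  intros Hu. induction m as [|m IH].
  - simpl. rewrite Rmult_0_l, exp_0. lra.
  - rewrite S_INR. replace ((INR m + 1) * u) with (u + INR m * u) by ring.
    rewrite exp_plus. simpl. apply Rmult_le_compat; try lra.
    + apply pow_le; lra.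
    + apply exp_ineq1_le.
Qed.

Lemma escape_factor_bound (n F : nat) (t : R) :
  (1 <= n)%nat -> (F <= n)%nat -> 1 < t ->
  INR n - INR F <= INR n * (ln (1 + / t) / t) ->
  (1 + / INR n * (t - 1)) ^ (n - F) <= 1 + / t.
Proof.
  intros Hn HFn Ht Hgap.
  assert (Hn1 : 1 <= INR n) by (apply (le_INR 1); lia).
  assert (Hp : 0 < / INR n) by (apply Rinv_0_lt_compat; lra).
  assert (Hit : 0 < / t) by (apply Rinv_0_lt_compat; lra).
  assert (Hexp : INR (n - F) * (/ INR n * (t - 1)) <= ln (1 + / t)).
  { assert (INR F <= INR n) by (apply le_INR, HFn).
    rewrite minus_INR by exact HFn.
    apply Rle_trans with ((INR n * (ln (1 + / t) / t)) * (/ INR n * t)).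
    - apply Rmult_le_compat; nra.
    - right. field. lra. }
  apply Rle_trans with (exp (INR (n - F) * (/ INR n * (t - 1)))).
  - apply pow_le_exp. nra.
  - rewrite <- (exp_ln (1 + / t)) by lra.
    destruct (Rle_lt_or_eq_dec _ _ Hexp) as [Hlt|Heq];
      [left; apply exp_increasing, Hlt | rewrite Heq; lra].
Qed.

Lemma Rceil_bounds (r : R) : r <= IZR (Rceil r) < r + 1.
Proof.
  unfold Rceil. destruct (base_Int_part (- r)) as [B1 B2].
  rewrite opp_IZR. lra.
Qed.

Lemma tau_gt_1 (eps : R) : 0 < eps < 1 -> 1 < tau eps.
Proof.
  intros Heps. unfold tau.
  assert (He : 2 < exp 1) by (pose proof (exp_ineq1 1); lra).
  apply Rmult_lt_reg_r with eps; [lra|].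
  unfold Rdiv. rewrite Rmult_assoc, Rinv_l by lra. nra.
Qed.

(* The distance of f0 from n is at most (1 - alpha) n = n ln(1 + 1/tau) / tau,
   and f0 never exceeds n. *)
Lemma f0_gap (eps : R) (n : nat) (F : nat) :
  0 < eps < 1 -> f0 eps n = Z.of_nat F ->
  (F <= n)%nat /\ INR n - INR F <= INR n * (ln (1 + / tau eps) / tau eps).
Proof.
  intros Heps HF.
  pose proof (tau_gt_1 eps Heps) as Ht.
  assert (HL : 0 < ln (1 + / tau eps)).
  { rewrite <- ln_1. apply ln_increasing; [lra|].
    pose proof (Rinv_0_lt_compat _ (Rlt_trans _ _ _ Rlt_0_1 Ht)). lra. }
  assert (Hn : 0 <= INR n) by apply pos_INR.
  assert (Hgap : 0 <= INR n * (ln (1 + / tau eps) / tau eps)).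
  { apply Rmult_le_pos; [lra|]. unfold Rdiv.
    apply Rmult_le_pos; [lra|left; apply Rinv_0_lt_compat; lra]. }
  pose proof (Rceil_bounds (alpha eps * INR n)) as [Hlo Hhi].
  fold (f0 eps n) in Hlo, Hhi. rewrite HF, <- INR_IZR_INZ in Hlo, Hhi.
  unfold alpha in Hlo, Hhi.
  replace ((1 - / tau eps * ln (1 + / tau eps)) * INR n)
    with (INR n - INR n * (ln (1 + / tau eps) / tau eps)) in Hlo, Hhi
    by (field; lra).
  split; [|lra].
  assert (HFS : INR F < INR (S n)) by (rewrite S_INR; lra).
  apply INR_lt in HFS. lia.
Qed.

Theorem lemma5 (eps : R) (Heps : 0 < eps < 1) :
  exists N : nat, forall n : nat, (N <= n)%nat ->
    forall x : list bool, length x = n ->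
      (Z.of_nat (onemax x) < f0 eps n)%Z ->
      expected_g_mut eps n x <= 2.
Proof.
  exists 1%nat. intros n Hn x Hlen Hk.
  set (t := tau eps). set (F := Z.to_nat (f0 eps n)).
  pose proof (tau_gt_1 eps Heps) as Ht. fold t in Ht.
  assert (HF : f0 eps n = Z.of_nat F) by (unfold F; rewrite Z2Nat.id; lia).
  destruct (f0_gap eps n F Heps HF) as [HFn Hgap]. fold t in Hgap.
  assert (HkF : (onemax x < F)%nat) by lia.
  assert (Hn1 : 1 <= INR n) by (apply (le_INR 1); lia).
  assert (Hp : 0 <= / INR n <= 1).
  { split; [left; apply Rinv_0_lt_compat; lra|].
    rewrite <- Rinv_1; apply Rinv_le_contravar; lra. }
  assert (Hzeros : count_occ Bool.bool_dec x false = (n - onemax x)%nat)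
    by (pose proof (zeros_plus_ones x); lia).
  destruct (mutation_pgf_bound (/ INR n) t x Hp (Rlt_le _ _ Ht)) as [_ Hpgf].
  rewrite Hzeros in Hpgf.
  assert (Hit : / t < 1) by (rewrite <- Rinv_1; apply Rinv_lt_contravar; lra).
  apply Rle_trans with (mutation_pgf (/ INR n) t x / t ^ F).
  { apply expected_g_le_pgf; [lia | unfold t in Ht; lra | exact Hlen | exact HF]. }
  apply Rle_trans with ((1 + / INR n * (t - 1)) ^ (n - onemax x) * t ^ onemax x / t ^ F).
  { apply Rmult_le_compat_r; [left; apply Rinv_0_lt_compat, pow_lt; lra|exact Hpgf]. }
  apply Rle_trans with ((1 + / INR n * (t - 1)) ^ (n - F)).
  { apply pow_exchange_bound; [nra|lia]. }
  apply Rle_trans with (1 + / t); [apply escape_factor_bound; auto; lia | lra].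
Qed.
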